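(* Let $p$ be an odd prime of the form $p = q^2 + 1$ for some integer $q$. Then the sequence $\left(\left\lfloor n^{(p-1)/2}/p \right\rfloor\right)_{n \ge 1}$ is eventually prime-free. In particular, each of the sequences $\left\lfloor n^2/5 \right\rfloor$, $\left\lfloor n^8/17 \right\rfloor$, $\left\lfloor n^{18}/37 \right\rfloor$, $\left\lfloor n^{50}/101 \right\rfloor$, $\left\lfloor n^{98}/197 \right\rfloor$, $\left\lfloor n^{128}/257 \right\rfloor$ ($n \ge 1$) is eventually prime-free.
   Context: A sequence $(a_n)_{n\ge 1}$ of positive integers is called eventually prime-free if there exists an index $n_0$ such that $a_n$ is composite for all $n \ge n_0$. (Here, as in the paper, this is understood as: only finitely many terms $a_n$ are prime.) *)

From mathcomp Require Import all_boot.
Definition eventually_prime_free (a : nat -> nat) : Prop :=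
  exists n0 : nat, forall n : nat, n0 <= n -> ~~ prime (a n).

Definition floor_seq (e p : nat) : nat -> nat := fun n => n ^ e %/ p.

From mathcomp Require Import all_boot cyclic zify.

Set Implicit Arguments.
Unset Strict Implicit.

(* Write p = q^2 + 1 with q = 2k, so that the exponent (p - 1)/2 = 2k^2 makes
   n^((p-1)/2) = x^2 a perfect square, x = n^(k^2).  By Euler's criterion
   x^2 is congruent to 0, 1 or -1 = q^2 modulo p, i.e. to r^2 with r in
   {0, 1, q}.  Hence p * floor(x^2 / p) = x^2 - r^2 = (x - r)(x + r); as p
   divides one of the two factors, floor(x^2 / p) splits into two factors
   larger than 1 once x is large. *)

Lemma not_prime_mul (a b : nat) : 1 < a -> 1 < b -> ~~ prime (a * b).
Proof.
move=> a_gt1 b_gt1; apply/primePn; right; exists a; last exact: dvdn_mulr.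
by apply/andP; split; nia.
Qed.

Lemma sqr_eq1_mod_prime (p y : nat) :
  prime p -> y < p -> y * y = 1 %[mod p] -> y = 1 \/ y = p.-1.
Proof.
move=> p_pr y_lt_p yy1; have p_gt1 := prime_gt1 p_pr.
have y_gt0 : 0 < y by case: y y_lt_p yy1 => // _; rewrite mod0n modn_small.
have : p %| (y - 1) * (y + 1).
  rewrite -subn_sqr exp1n -eqn_mod_dvd ?expn_gt0 ?y_gt0 //.
  by rewrite -mulnn; apply/eqP.
rewrite Euclid_dvdM // => /orP[dv | dv].
- left; have [/eqP y1 | y1] := posnP (y - 1); first by lia.
  by have := dvdn_leq y1 dv; lia.
- by right; have := dvdn_leq (ltn_addl y (ltn0Sn 0)) dv; lia.
Qed.

Lemma expn_half_mod_prime (p n : nat) :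
  prime p -> odd p -> n ^ p.-1./2 %% p \in [:: 0; 1; p.-1].
Proof.
move=> p_pr p_odd; have p_gt1 := prime_gt1 p_pr.
have halfK : p.-1./2 + p.-1./2 = p.-1.
  rewrite addnn -[RHS]odd_double_half.
  by case: p p_odd {p_pr p_gt1} => //= p' /negbTE ->.
have [p_dvd_n | p_ndvd_n] := boolP (p %| n).
  suff /eqP -> : p %| n ^ p.-1./2 by [].
  by rewrite dvdn_exp //; lia.
set y := n ^ p.-1./2 %% p.
have y_lt_p : y < p by rewrite ltn_mod prime_gt0.
have yy1 : y * y = 1 %[mod p].
  rewrite modnMml modnMmr -expnD halfK -totient_prime //.
  by apply: Euler_exp_totient; rewrite coprime_sym prime_coprime.
by have [-> | ->] := sqr_eq1_mod_prime p_pr y_lt_p yy1; rewrite !inE eqxx ?orbT.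
Qed.

Lemma sqr_div_not_prime (p r x : nat) :
  prime p -> p + r < x -> x * x %% p = r * r -> ~~ prime (x * x %/ p).
Proof.
move=> p_pr x_gt xx_mod; have p_gt1 := prime_gt1 p_pr.
have p_gt0 := ltnW p_gt1.
set s := x * x %/ p.
have fact_s : p * s = (x - r) * (x + r).
  by have := divn_eq (x * x) p; rewrite xx_mod -/s; nia.
have : p %| (x - r) * (x + r) by rewrite -fact_s dvdn_mulr.
rewrite Euclid_dvdM // => /orP[/dvdnP[c def_c] | /dvdnP[c def_c]].
- have -> : s = c * (x + r) by apply/eqP; rewrite -(eqn_pmul2l p_gt0); nia.
  apply: not_prime_mul; nia.
- have -> : s = (x - r) * c by apply/eqP; rewrite -(eqn_pmul2l p_gt0); nia.
  apply: not_prime_mul; nia.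
Qed.

Lemma floor_seq_half_eventually_prime_free (p q : nat) :
  prime p -> odd p -> p = q ^ 2 + 1 ->
  eventually_prime_free (floor_seq ((p - 1) %/ 2) p).
Proof.
move=> p_pr p_odd def_p; have p_gt1 := prime_gt1 p_pr.
have [k def_q] : exists k, q = k.*2.
  exists q./2; rewrite -[LHS]odd_double_half.
  by move: p_odd; rewrite def_p oddD oddX /=; case: (odd q).
have k_gt0 : 0 < k.
  by rewrite lt0n; apply/eqP => k0; move: p_gt1; rewrite def_p def_q k0.
have half_p : (p - 1) %/ 2 = p.-1./2 by rewrite subn1 divn2.
have exp_sqr : p.-1./2 = k ^ 2 + k ^ 2.
  rewrite def_p def_q addn1 /= -divn2 -mul2n expnMn -mulnn -mulnA mulKn //.
  by rewrite addnn -mul2n.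
exists (2 * p) => n n_ge; rewrite /floor_seq half_p.
have sq_res := expn_half_mod_prime n p_pr p_odd.
rewrite exp_sqr expnD in sq_res *; set x := n ^ (k ^ 2) in sq_res *.
have n_le_x : n <= x by rewrite -[X in X <= _]expn1 leq_pexp2l ?expn_gt0; lia.
have q_lt_p : q < p by rewrite def_p; nia.
have [r [r_le_q x_res]] : exists r, r <= q /\ x * x %% p = r * r.
  move: sq_res; rewrite !inE => /or3P[] /eqP res.
  - by exists 0; split; [|rewrite res].
  - by exists 1; split; [lia | rewrite res].
  - by exists q; split; [|rewrite res def_p addn1 /= mulnn].
by apply: (sqr_div_not_prime p_pr _ x_res); lia.
Qed.

Theorem theorem10 :
  (forall p q : nat, prime p -> odd p -> p = q ^ 2 + 1 ->
     eventually_prime_free (floor_seq ((p - 1) %/ 2) p)) /\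
  eventually_prime_free (floor_seq 2 5) /\
  eventually_prime_free (floor_seq 8 17) /\
  eventually_prime_free (floor_seq 18 37) /\
  eventually_prime_free (floor_seq 50 101) /\
  eventually_prime_free (floor_seq 98 197) /\
  eventually_prime_free (floor_seq 128 257).
Proof.
split; first exact: floor_seq_half_eventually_prime_free.
split; first exact: (@floor_seq_half_eventually_prime_free 5 2).
split; first exact: (@floor_seq_half_eventually_prime_free 17 4).
split; first exact: (@floor_seq_half_eventually_prime_free 37 6).
split; first exact: (@floor_seq_half_eventually_prime_free 101 10).
split; first exact: (@floor_seq_half_eventually_prime_free 197 14).
exact: (@floor_seq_half_eventually_prime_free 257 16).
Qed.
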